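(* Let $S$ be a random subset of a finite set $V$ and let $u\in V$. Suppose that the events $\{u'\in S\}$ for $u'\ne u$ are jointly independent of the event $\{u\in S\}$. Let $s$ be an element of $S$ chosen uniformly at random (if $S=\varnothing$, $s$ is undefined). Then $\Pr[u=s]\ge\Pr[u\in S]/(\mathbb{E}[|S|]+1)$. *)

From HB Require Import structures.
From mathcomp Require Import all_boot all_order all_algebra.
Set Implicit Arguments. Unset Strict Implicit. Unset Printing Implicit Defensive.
Import Order.TTheory GRing.Theory Num.Theory.
Local Open Scope ring_scope.

(* A random subset S of the finite set V: a probability distribution
   P on {set V}. *)
Definition is_distr (R : realFieldType) (V : finType) (P : {ffun {set V} -> R}) :=
  (forall S, 0 <= P S) /\ \sum_(S : {set V}) P S = 1.

Definition prob (R : realFieldType) (V : finType) (P : {ffun {set V} -> R})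
  (E : pred {set V}) : R := \sum_(S : {set V} | E S) P S.

Definition exp_card (R : realFieldType) (V : finType) (P : {ffun {set V} -> R}) : R :=
  \sum_(S : {set V}) P S * #|S|%:R.

(* The family of events {u' in S}, u' <> u, is (jointly) independent of the
   event {u in S}: every event determined by (1[u' in S])_{u' <> u}, i.e. by
   S :\ u, is independent of {u in S}. *)
Definition indep_rest (R : realFieldType) (V : finType) (P : {ffun {set V} -> R})
  (u : V) :=
  forall A : {set {set V}},
    prob P (fun S => (S :\ u \in A) && (u \in S))
    = prob P (fun S => S :\ u \in A) * prob P (fun S => u \in S).

(* Pr[u = s], where s is uniform in S (given S); the case S = set0
   contributes nothing since then u \notin S. *)
Definition prob_pick (R : realFieldType) (V : finType) (P : {ffun {set V} -> R})
  (u : V) : R :=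
  \sum_(S : {set V} | u \in S) P S * (#|S|%:R)^-1.

(* Given S :\ u, the pick s equals u with probability 1/(|S :\ u| + 1) when u is in S,
   and independence lets us drop the conditioning on u \in S:
   Pr[u = s] = Pr[u \in S] * E[1/(|S :\ u| + 1)].  By Jensen's inequality for the
   convex map x |-> 1/(x + 1), the expectation is at least 1/(E|S :\ u| + 1), and
   E|S :\ u| <= E|S|. *)
From HB Require Import structures.
From mathcomp Require Import all_boot all_order all_algebra.
From mathcomp Require Import ring lra.
Set Implicit Arguments. Unset Strict Implicit. Unset Printing Implicit Defensive.
Import Order.TTheory GRing.Theory Num.Theory.
Local Open Scope ring_scope.

Lemma inv_addr1_ge_tangent (R : realFieldType) (x m : R) : 0 <= x -> 0 <= m ->
  (m + 1)^-1 - (x - m) / (m + 1) ^+ 2 <= (x + 1)^-1.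
Proof.
move=> x0 m0; rewrite -subr_ge0.
have -> : (x + 1)^-1 - ((m + 1)^-1 - (x - m) / (m + 1) ^+ 2)
    = (x - m) ^+ 2 / ((x + 1) * (m + 1) ^+ 2).
  by field; rewrite !gt_eqF //; lra.
by rewrite divr_ge0 ?sqr_ge0 ?mulr_ge0 ?sqr_ge0 //; lra.
Qed.

Lemma jensen_inv_addr1 (R : realFieldType) (I : finType) (w x : I -> R) :
  (forall i, 0 <= w i) -> (forall i, 0 <= x i) -> \sum_i w i = 1 ->
  (\sum_i w i * x i + 1)^-1 <= \sum_i w i / (x i + 1).
Proof.
move=> w0 x0 w1; set m := \sum_i w i * x i.
have m0 : 0 <= m by apply: sumr_ge0 => i _; rewrite mulr_ge0.
have tangent_sum : \sum_i w i * ((m + 1)^-1 - (x i - m) / (m + 1) ^+ 2)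
    = (m + 1)^-1.
  under eq_bigr do rewrite mulrBr mulrA mulrBr.
  rewrite sumrB -!mulr_suml sumrB -mulr_suml w1 -/m; ring.
rewrite -tangent_sum; apply: ler_sum => i _.
by rewrite ler_wpM2l ?inv_addr1_ge_tangent.
Qed.

Section RandomSubset.

Variables (R : realFieldType) (V : finType) (P : {ffun {set V} -> R}) (u : V).

Lemma prob_pick_rest :
  prob_pick P u = \sum_(S : {set V} | u \in S) P S / (#|S :\ u|%:R + 1).
Proof.
apply: eq_bigr => S uS; congr (_ * _^-1).
by rewrite [#|S|](cardsD1 u) uS natrD addrC.
Qed.

(* Summing first over the value T of S :\ u reduces the claim to the events {S :\ u = T}. *)
Lemma indep_rest_sum (g : {set V} -> R) : indep_rest P u ->
  \sum_(S : {set V} | u \in S) P S * g (S :\ u)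
    = prob P (fun S => u \in S) * \sum_(S : {set V}) P S * g (S :\ u).
Proof.
move=> indep.
have by_rest (C : pred {set V}) : \sum_(S : {set V} | C S) P S * g (S :\ u)
    = \sum_(T : {set V}) g T * prob P (fun S => (S :\ u \in [set T]) && C S).
  rewrite (partition_big (fun S => S :\ u) predT) //=.
  apply: eq_bigr => T _; rewrite /prob mulr_sumr.
  rewrite [RHS](eq_bigl (fun S => C S && (S :\ u == T))); last first.
    by move=> S; rewrite in_set1 andbC.
  by apply: eq_bigr => S /andP[_ /eqP ->]; rewrite mulrC.
rewrite by_rest (by_rest predT) mulr_sumr; apply: eq_bigr => T _.
have -> : prob P (fun S => (S :\ u \in [set T]) && predT S)
    = prob P (fun S => S :\ u \in [set T]) by apply: eq_bigl => S; rewrite andbT.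
by rewrite indep; ring.
Qed.

Lemma exp_card_rest_le : (forall S, 0 <= P S) ->
  \sum_(S : {set V}) P S * #|S :\ u|%:R <= exp_card P.
Proof.
move=> P0; apply: ler_sum => S _; rewrite ler_wpM2l // ler_nat.
exact/subset_leq_card/subsetDl.
Qed.

End RandomSubset.

Theorem mainTheorem9 (R : realFieldType) (V : finType) (P : {ffun {set V} -> R})
  (u : V) :
  is_distr P -> indep_rest P u ->
  prob_pick P u >= prob P (fun S => u \in S) / (exp_card P + 1).
Proof.
move=> [P0 P1] indep.
have p0 : 0 <= prob P (fun S => u \in S) by apply: sumr_ge0.
have jensen := @jensen_inv_addr1 _ _ P (fun S => #|S :\ u|%:R) P0 (fun S => ler0n _ _) P1.
have m0 : 0 <= \sum_(S : {set V}) P S * #|S :\ u|%:R.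
  by apply: sumr_ge0 => S _; rewrite mulr_ge0.
rewrite prob_pick_rest (@indep_rest_sum _ _ P u (fun T => (#|T|%:R + 1)^-1)) //.
rewrite ler_wpM2l //; apply: le_trans jensen.
have rest_le := exp_card_rest_le u P0.
by rewrite lef_pV2 ?posrE ?lerD2r //; lra.
Qed.
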